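(* Let $d,p\in\mathbb N$, let $\mathcal X$ be a bounded, nonempty, Borel subset of $\mathbb R^d$ and $P_X$ a Borel probability distribution on $\mathcal X$. For $a\ge0$ let $k_{p,a}(x,y)=(x^\top y+a)^p$. Then there exists $C(p,d,P_X)>0$, depending only on $p$, $d$ and $P_X$, such that for all $a\ge0$ and $\gamma>0$, the quantity $H_\gamma$ associated with $k_{p,a}$ and $P_X$ satisfies $H_\gamma\le C(p,d,P_X)$.
   Context: For a kernel $k$ with a decomposition $k(x,y)=\sum_{r\in\mathcal R}\nu_re_r(x)e_r(y)$ where the $\nu_r>0$ are the (positive) eigenvalues of the integral operator $f\mapsto\int k(x,\cdot)f(x)\,dP_X(x)$ on $L_2(P_X)$ and $(e_r)$ are corresponding $L_2(P_X)$-orthonormal eigenfunctions, define for $\gamma>0$: $a_r=1/(1+\gamma/\nu_r)$ and $H_\gamma=\sup_{x\in\mathcal X}\sum_{r\in\mathcal R}a_re_r(x)^2$ (this does not depend on the choice of orthonormal eigenfunctions). *)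

From HB Require Import structures.
From mathcomp Require Import all_boot all_order all_algebra.
From mathcomp Require Import all_classical all_reals all_analysis.
Set Implicit Arguments. Unset Strict Implicit. Unset Printing Implicit Defensive.
Import Order.TTheory GRing.Theory Num.Theory.
Import numFieldNormedType.Exports.
Local Open Scope classical_set_scope.
Local Open Scope ring_scope.

Definition Rd (R : realType) (d : nat) :=
  g_sigma_algebraType (@open 'rV[R]_d).

Definition dotp (R : realType) (d : nat) (x y : 'rV[R]_d) : R :=
  \sum_(i < d) x ord0 i * y ord0 i.

Definition kpoly (R : realType) (d p : nat) (a : R) (x y : 'rV[R]_d) : R :=
  (dotp x y + a) ^+ p.

(* (nu_r, e_r)_{r in I} is a decomposition of the kernel k as in the context:
   the nu_r > 0 are eigenvalues of the integral operator
   f |-> \int k(x,.) f(x) dP(x) on L_2(P) (P concentrated on X),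
   the e_r are corresponding L_2(P)-orthonormal eigenfunctions, and
   k(x,y) = \sum_r nu_r e_r(x) e_r(y) on X x X. *)
Definition kernel_decomposition (R : realType) (d : nat) (X : set (Rd R d))
    (P : probability (Rd R d) R) (k : Rd R d -> Rd R d -> R)
    (I : finType) (nu : I -> R) (e : I -> Rd R d -> R) : Prop :=
  (forall r, 0 < nu r) /\
  (forall r, measurable_fun X (e r)) /\
  (forall r, P.-integrable X (fun x => ((e r x) ^+ 2)%:E)) /\
      (forall r s, (\int[P]_(x in X) (e r x * e s x)%:E)%E
                     = ((r == s)%:R)%:E) /\
      (forall r y, X y ->
         (\int[P]_(x in X) (k x y * e r x)%:E)%E = (nu r * e r y)%:E) /\
      (forall x y, X x -> X y -> k x y = \sum_(r : I) nu r * e r x * e r y).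

Definition a_coef (R : realType) (I : Type) (nu : I -> R) (gamma : R) (r : I) : R :=
  1 / (1 + gamma / nu r).

Definition H_gamma (R : realType) (d : nat) (X : set (Rd R d))
    (I : finType) (nu : I -> R) (e : I -> Rd R d -> R) (gamma : R) : \bar R :=
  ereal_sup [set (\sum_(r : I) a_coef nu gamma r * (e r x) ^+ 2)%:E | x in X].

From HB Require Import structures.
From mathcomp Require Import all_boot all_order all_algebra.
From mathcomp Require Import all_classical all_reals all_analysis.
From mathcomp Require Import lra ring measurable_realfun.
Set Implicit Arguments. Unset Strict Implicit. Unset Printing Implicit Defensive.
Import Order.TTheory GRing.Theory Num.Theory.
Import numFieldNormedType.Exports.
Local Open Scope classical_set_scope.
Local Open Scope ring_scope.

(* Expanding [(x^T y + a)^p] over words [t : 'I_p -> option 'I_d] writes the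
   kernel as [sum_t w_a(t) m_t(x) m_t(y)], with monomials [m_t] independent of
   [a] and weights [w_a(t) >= 0].  Testing the eigen-equations and the diagonal
   [k(y, y)] against this expansion shows that on the support [S] of [w_a] the
   eigenfunctions reproduce the monomials, [m_t(y) = sum_r e_r(y) <m_t, e_r>],
   so that [(m_t(y))_(t in S) = G_S v] for the Gram matrix [G_S] of the [m_t]
   in [L_2(P_X)] and a vector [v] with [<m(y), v> = sum_r e_r(y)^2].  Hence
   [sum_r e_r(y)^2 = m(y)^T G_S^+ m(y)], bounded via a bound [K] on the
   coordinates of points of [X].  As [a_r <= 1] and there are finitely many
   supports [S], summing these bounds over all [S] yields a constant
   independent of [a] and [gamma]. *)

Section integrable_lemmas.
Context (dT : measure_display) (T : measurableType dT) (R : realType).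
Variables (D : set T) (mD : measurable D).

Lemma integrable_bounded_mul (mu : {measure set T -> \bar R}) (g f : T -> R) (c : R) :
  measurable_fun D g -> (forall x, D x -> `|g x| <= c) ->
  mu.-integrable D (EFin \o f) -> mu.-integrable D (fun x => (g x * f x)%:E).
Proof.
move=> mg gc intf.
have mf : measurable_fun D f by apply/measurable_EFinP; exact: measurable_int intf.
apply: (le_integrable mD _ _ (integrableZl mD c intf)).
  exact/measurable_EFinP/measurable_funM.
move=> x Dx /=.
by rewrite lee_fin !normrM ler_wpM2r // (le_trans (gc x Dx)) // ler_norm.
Qed.

Lemma integral_lincomb (mu : {measure set T -> \bar R}) (I : finType) (c : I -> R)
    (g : I -> T -> R) :
  (forall i, mu.-integrable D (EFin \o g i)) ->
  (\int[mu]_(x in D) (\sum_i c i * g i x)%:E)%E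
    = (\sum_i c i * \int[mu]_(x in D) g i x)%:E.
Proof.
move=> intg.
under eq_integral do rewrite -sumEFin.
rewrite integral_sum //; last first.
  move=> i; apply: (eq_integrable mD _ _ _ (integrableZl mD (c i) (intg i))).
  by move=> x _; rewrite /= EFinM.
rewrite -sumEFin; apply: eq_bigr => i _.
under eq_integral do rewrite EFinM.
rewrite (integralZl mD (intg i)) EFinM fineK //.
by have := integrable_fin_num mD (intg i).
Qed.

Variable mu : {finite_measure set T -> \bar R}.

Lemma integrable_bounded (f : T -> R) (c : R) : measurable_fun D f ->
  (forall x, D x -> `|f x| <= c) -> mu.-integrable D (EFin \o f).
Proof.
move=> mf fc; have intc := @finite_measure_integrable_cst _ _ _ mu D c mD.
apply: (le_integrable mD _ _ intc); first exact/measurable_EFinP.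
by move=> x Dx; rewrite /= lee_fin (le_trans (fc x Dx)) // ler_norm.
Qed.

(* [|f| <= 1 + f^2], which is integrable for a finite measure. *)
Lemma integrable_of_sqr (f : T -> R) : measurable_fun D f ->
  mu.-integrable D (fun x => (f x ^+ 2)%:E) -> mu.-integrable D (EFin \o f).
Proof.
move=> mf intf2.
have int1f2 : mu.-integrable D (fun x => (1 + f x ^+ 2)%:E).
  under eq_fun do rewrite EFinD.
  exact: integrableD (finite_measure_integrable_cst _ 1 mD) intf2.
apply: (le_integrable mD _ _ int1f2); first exact/measurable_EFinP.
move=> x _; rewrite /= lee_fin [X in _ <= X]ger0_norm ?addr_ge0 ?sqr_ge0 //.
by have [f0|f0] := ler0P (f x); rewrite ?ler0_norm ?gtr0_norm //; nra.
Qed.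

End integrable_lemmas.

Lemma sum_enum_val (R : nmodType) (J : finType) (F : J -> R) :
  \sum_t F t = \sum_(i < #|J|) F (enum_val i).
Proof.
rewrite (reindex (@enum_val J predT)) //=.
by exists (@enum_rank J) => x _; [exact: enum_valK | exact: enum_rankK].
Qed.

Lemma sum_option (R : nmodType) (I : finType) (F : option I -> R) :
  \sum_o F o = F None + \sum_i F (Some i).
Proof.
rewrite [LHS](bigD1 None) //=; congr (_ + _).
rewrite (reindex_omap Some (fun o => o)) /=; last by case.
by apply: eq_bigl => i; rewrite eqxx.
Qed.

Section pinv_quadratic_form.
Variables (R : fieldType) (J : finType).

Definition fun_mx (G : J -> J -> R) : 'M[R]_#|J| :=
  \matrix_(i, j) G (enum_val i) (enum_val j).

Definition pinv_fun (G : J -> J -> R) (t s : J) : R :=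
  pinvmx (fun_mx G) (enum_rank t) (enum_rank s).

Lemma dot_sym_image_pinv (G : J -> J -> R) (u v : J -> R) :
  (forall t s, G t s = G s t) -> (forall t, u t = \sum_s G t s * v s) ->
  \sum_t u t * v t = \sum_t \sum_s u t * pinv_fun G t s * u s.
Proof.
move=> Gsym uGv.
pose U : 'rV[R]_#|J| := \row_i u (enum_val i).
pose V : 'rV[R]_#|J| := \row_i v (enum_val i).
pose A := fun_mx G.
have AT : A^T = A by apply/matrixP => i j; rewrite !mxE Gsym.
have UVA : U = V *m A.
  apply/matrixP => i j; rewrite !mxE uGv sum_enum_val; apply: eq_bigr => k _.
  by rewrite !mxE mulrC Gsym.
have UA : (U <= A)%MS by rewrite UVA submxMl.
(* [U = V A] with [A] symmetric, so [U A^+ U^T = V A A^+ A V^T = V A V^T = U V^T]. *)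
have UpinvU : U *m pinvmx A *m U^T = U *m V^T.
  by rewrite {2}UVA trmx_mul AT mulmxA -[X in _ = X *m _](mulmxKpV UA).
have -> : \sum_t u t * v t = (U *m V^T) 0 0.
  by rewrite !mxE sum_enum_val; apply: eq_bigr => i _; rewrite !mxE.
rewrite -UpinvU !mxE [RHS]sum_enum_val.
under [RHS]eq_bigr => i _ do rewrite sum_enum_val.
rewrite exchange_big; apply: eq_bigr => i _.
rewrite !mxE mulr_suml; apply: eq_bigr => k _.
by rewrite /U /pinv_fun mxE !enum_valK.
Qed.

End pinv_quadratic_form.

Section kpoly_expansion.
Variables (R : realType) (d p : nat).

(* A word [t : 'I_p -> option 'I_d] picks, in each of the [p] factors of
   [(x^T y + a)^p], either the summand [x_i y_i] ([Some i]) or [a] ([None]). *)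
Local Notation word := {ffun 'I_p -> option 'I_d}.

Definition monomial (t : word) (x : 'rV[R]_d) : R :=
  \prod_(k < p) (if t k is Some i then x ord0 i else 1).

Definition word_weight (a : R) (t : word) : R :=
  \prod_(k < p) (if t k is Some _ then 1 else a).

Lemma kpoly_expansion a (x y : 'rV[R]_d) :
  kpoly p a x y = \sum_(t : word) word_weight a t * monomial t x * monomial t y.
Proof.
rewrite /kpoly; have -> : dotp x y + a
    = \sum_(o : option 'I_d) (if o is Some i then x ord0 i * y ord0 i else a).
  by rewrite sum_option addrC.
rewrite -[in LHS](card_ord p) -prodr_const bigA_distr_bigA.
apply: eq_bigr => t _; rewrite -!big_split /=; apply: eq_bigr => k _.
by case: (t k) => [i|]; rewrite ?mul1r ?mulr1.
Qed.

Lemma word_weight_ge0 a t : 0 <= a -> 0 <= word_weight a t.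
Proof. by move=> a0; apply: prodr_ge0 => k _; case: (t k). Qed.

Lemma norm_monomial_le (K : R) t (x : 'rV[R]_d) :
  1 <= K -> (forall i, `|x ord0 i| <= K) -> `|monomial t x| <= K ^+ p.
Proof.
move=> K1 xK; rewrite normr_prod -[in leRHS](card_ord p) -prodr_const.
apply: ler_prod => k _; rewrite normr_ge0 /=.
by case: (t k) => [i|]; rewrite ?normr1.
Qed.

End kpoly_expansion.

Lemma measurable_coord (R : realType) d (D : set (Rd R d)) (i : 'I_d) :
  measurable D -> measurable_fun D (fun x : Rd R d => (x : 'rV[R]_d) ord0 i).
Proof.
move=> mD; apply: (measurability _ (RGenOpens.measurableE R)).
move=> _ [_ [a [b ->] <-]]; apply: measurableI => //.
apply: sub_sigma_algebra; apply: (@open_comp _ _ (fun x : 'rV[R]_d => x ord0 i)).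
  by move=> x _; exact: coord_continuous.
exact: interval_open.
Qed.

Lemma bounded_coord_le (R : realType) d (X : set 'rV[R]_d) :
  [bounded x | x in X] ->
  exists K : R, 1 <= K /\ forall x, X x -> forall i, `|x ord0 i| <= K.
Proof.
move=> [M [Mreal XM]]; exists (`|M| + 1); split; first by rewrite lerDr.
move=> x Xx i; apply: le_trans (XM _ _ x Xx).
  by rewrite [leRHS]mx_normrE (le_bigmax _ _ (ord0, i)).
by rewrite (le_lt_trans (real_ler_norm Mreal)) // ltrDl.
Qed.

Section monomial_gram.
Variables (R : realType) (d p : nat) (X : set (Rd R d)).
Variable P : probability (Rd R d) R.
Hypothesis mX : measurable X.
Variable K : R.
Hypotheses (K1 : 1 <= K) (XK : forall x, X x -> forall i, `|(x : 'rV[R]_d) ord0 i| <= K).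

Local Notation word := {ffun 'I_p -> option 'I_d}.

Lemma measurable_monomial (t : word) :
  measurable_fun X (fun x : Rd R d => monomial t (x : 'rV[R]_d)).
Proof.
apply: measurable_prod => k _; case: (t k) => [i|]; first exact: measurable_coord.
exact: measurable_cst.
Qed.

Lemma norm_monomial_le_on (t : word) x :
  X x -> `|monomial t (x : 'rV[R]_d)| <= K ^+ p.
Proof. by move=> Xx; apply: norm_monomial_le => // i; exact: XK. Qed.

Lemma integrable_monomialM (t s : word) :
  P.-integrable X (EFin \o (fun x => monomial t x * monomial s x)).
Proof.
apply: (@integrable_bounded _ _ _ _ mX _ _ (K ^+ p * K ^+ p)).
  by apply: measurable_funM; exact: measurable_monomial.
by move=> x Xx; rewrite normrM ler_pM // norm_monomial_le_on.
Qed.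

Definition gram (t s : word) : R := \int[P]_(x in X) (monomial t x * monomial s x).

Lemma gramC t s : gram t s = gram s t.
Proof. by apply: eq_Rintegral => x _; rewrite mulrC. Qed.

Definition gram_on (S : {set word}) (t s : word) : R :=
  if (t \in S) && (s \in S) then gram t s else 0.

Definition monomial_on (S : {set word}) (y : 'rV[R]_d) (t : word) : R :=
  if t \in S then monomial t y else 0.

(* The support [S] of the weights depends on [a]; summing over all possible
   supports gives a bound that does not. *)
Definition eigen_bound : R := 1 + \sum_(S : {set word}) \sum_t \sum_s
  `|pinv_fun (gram_on S) t s| * K ^+ p * K ^+ p.

Lemma eigen_bound_gt0 : 0 < eigen_bound.
Proof.
rewrite ltr_pwDl // sumr_ge0 // => S _; rewrite sumr_ge0 // => t _.
by rewrite sumr_ge0 // => s _; rewrite !mulr_ge0 // exprn_ge0 // (le_trans ler01 K1).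
Qed.

Lemma pinv_gram_quad_le S y : X y ->
  \sum_t \sum_s monomial_on S y t * pinv_fun (gram_on S) t s * monomial_on S y s
    <= eigen_bound.
Proof.
move=> Xy.
have K0 : 0 <= K ^+ p by rewrite exprn_ge0 // (le_trans ler01 K1).
have yK t : `|monomial_on S y t| <= K ^+ p.
  by rewrite /monomial_on; case: ifP => _; [exact: norm_monomial_le_on | rewrite normr0].
apply: (@le_trans _ _ (\sum_t \sum_s `|pinv_fun (gram_on S) t s| * K ^+ p * K ^+ p)).
  apply: ler_sum => t _; apply: ler_sum => s _.
  rewrite (le_trans (ler_norm _)) // !normrM mulrAC [leLHS]mulrC -[leRHS]mulrA.
  by rewrite ler_wpM2l // ler_pM.
rewrite /eigen_bound (bigD1 S) //= addrCA lerDl addr_ge0 // sumr_ge0 // => S' _.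
by rewrite sumr_ge0 // => t _; rewrite sumr_ge0 // => s _; rewrite !mulr_ge0.
Qed.

Section decomposition.
Variables (a : R) (I : finType) (nu : I -> R) (e : I -> Rd R d -> R).
Hypothesis a_ge0 : 0 <= a.
Hypothesis nu_gt0 : forall r, 0 < nu r.
Hypothesis measurable_e : forall r, measurable_fun X (e r).
Hypothesis integrable_e2 : forall r, P.-integrable X (fun x => (e r x ^+ 2)%:E).
Hypothesis e_orthonormal : forall r s,
  (\int[P]_(x in X) (e r x * e s x)%:E)%E = ((r == s)%:R)%:E.
Hypothesis e_eigen : forall r y, X y ->
  (\int[P]_(x in X) (kpoly p a x y * e r x)%:E)%E = (nu r * e r y)%:E.
Hypothesis kpoly_decomposition : forall x y, X x -> X y ->
  kpoly p a x y = \sum_r nu r * e r x * e r y.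

Local Notation w := (word_weight a).

Definition moment r (t : word) : R := \int[P]_(x in X) (monomial t x * e r x).

Definition eigen_coef r (t : word) : R := w t * moment r t / nu r.

Definition eigen_proj (y : 'rV[R]_d) (t : word) : R := \sum_r e r y * moment r t.

Lemma nu_neq0 r : nu r != 0.
Proof. by rewrite gt_eqF. Qed.

Lemma integrable_monomial_e (t : word) r :
  P.-integrable X (EFin \o (fun x => monomial t x * e r x)).
Proof.
apply: (integrable_bounded_mul mX (measurable_monomial t) (norm_monomial_le_on t)).
exact: (integrable_of_sqr mX) (measurable_e r) (integrable_e2 r).
Qed.

Lemma nu_eigenE r y : X y ->
  nu r * e r y = \sum_(t : word) w t * monomial t y * moment r t.
Proof.
move=> Xy; have := e_eigen r Xy.
rewrite (eq_integral (fun x : Rd R d =>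
  (\sum_(t : word) w t * monomial t y * (monomial t x * e r x))%:E)); last first.
  move=> x _; rewrite kpoly_expansion mulr_suml; congr EFin.
  by apply: eq_bigr => t _; ring.
rewrite (integral_lincomb mX (fun t => w t * monomial t y)); first by case=> <-.
by move=> t; exact: integrable_monomial_e.
Qed.

Lemma eigenE r x : X x -> e r x = \sum_(t : word) eigen_coef r t * monomial t x.
Proof.
move=> Xx; apply: (mulfI (nu_neq0 r)); rewrite nu_eigenE // mulr_sumr.
by apply: eq_bigr => t _; rewrite /eigen_coef; field; exact: nu_neq0.
Qed.

Lemma weighted_moment_orthonormal r s :
  \sum_(t : word) w t * moment r t * moment s t = nu r * (r == s)%:R.
Proof.
have := e_orthonormal r s.
rewrite (eq_integral (fun x : Rd R d =>
  (\sum_(t : word) eigen_coef r t * (monomial t x * e s x))%:E)); last first.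
  move=> x; rewrite in_setE => Xx; rewrite (eigenE r Xx) mulr_suml; congr EFin.
  by apply: eq_bigr => t _; ring.
rewrite (integral_lincomb mX (eigen_coef r)); last first.
  by move=> t; exact: integrable_monomial_e.
case=> <-; rewrite mulr_sumr; apply: eq_bigr => t _.
by rewrite /eigen_coef /moment; field; exact: nu_neq0.
Qed.

Lemma moment_gram r t : moment r t = \sum_(s : word) gram t s * eigen_coef r s.
Proof.
rewrite /moment /Rintegral (eq_integral (fun x : Rd R d =>
  (\sum_(s : word) eigen_coef r s * (monomial t x * monomial s x))%:E)); last first.
  move=> x; rewrite in_setE => Xx; rewrite (eigenE r Xx) mulr_sumr; congr EFin.
  by apply: eq_bigr => s _; ring.
rewrite (integral_lincomb mX (eigen_coef r)) /=; last first.
  by move=> s; exact: integrable_monomialM.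
by apply: eq_bigr => s _; rewrite mulrC.
Qed.

Lemma weighted_monomial_sqr y : X y ->
  \sum_(t : word) w t * monomial t y ^+ 2 = \sum_r nu r * e r y ^+ 2.
Proof.
move=> Xy; transitivity (kpoly p a y y).
  by rewrite kpoly_expansion; apply: eq_bigr => t _; ring.
by rewrite kpoly_decomposition //; apply: eq_bigr => r _; ring.
Qed.

Lemma weighted_monomial_proj y : X y ->
  \sum_(t : word) w t * monomial t y * eigen_proj y t = \sum_r nu r * e r y ^+ 2.
Proof.
move=> Xy; under eq_bigr do rewrite /eigen_proj mulr_sumr.
rewrite exchange_big; apply: eq_bigr => r _.
rewrite expr2 mulrA (nu_eigenE r Xy) mulr_suml; apply: eq_bigr => t _; ring.
Qed.

Lemma weighted_proj_sqr y :
  \sum_(t : word) w t * eigen_proj y t ^+ 2 = \sum_r nu r * e r y ^+ 2.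
Proof.
transitivity
  (\sum_(t : word) \sum_r \sum_s e r y * e s y * (w t * moment r t * moment s t)).
  apply: eq_bigr => t _; rewrite /eigen_proj expr2 mulr_suml mulr_sumr.
  apply: eq_bigr => r _; rewrite !mulr_sumr; apply: eq_bigr => s _; ring.
rewrite exchange_big; apply: eq_bigr => r _; rewrite exchange_big.
under eq_bigr do rewrite -mulr_sumr weighted_moment_orthonormal.
rewrite (bigD1 r) //= eqxx big1 ?addr0; first by rewrite mulr1; ring.
by move=> s; rewrite eq_sym => /negbTE ->; rewrite !mulr0.
Qed.

Lemma monomial_eigen_proj y (t : word) : X y -> w t != 0 ->
  monomial t y = eigen_proj y t.
Proof.
move=> Xy wt_neq0.
have dist0 : \sum_(s : word) w s * (monomial s y - eigen_proj y s) ^+ 2 = 0.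
  transitivity (\sum_(s : word) w s * monomial s y ^+ 2
     - 2 * (\sum_(s : word) w s * monomial s y * eigen_proj y s)
     + \sum_(s : word) w s * eigen_proj y s ^+ 2).
    by rewrite mulr_sumr -sumrB -big_split /=; apply: eq_bigr => s _; ring.
  (* each of the three sums equals [sum_r nu_r e_r(y)^2] *)
  by rewrite weighted_monomial_sqr // weighted_monomial_proj // weighted_proj_sqr; ring.
have w_ge0 s : true -> 0 <= w s * (monomial s y - eigen_proj y s) ^+ 2.
  by move=> _; rewrite mulr_ge0 ?word_weight_ge0 ?sqr_ge0.
have /eqP := psumr_eq0P w_ge0 dist0 (i := t) isT.
by rewrite mulf_eq0 (negbTE wt_neq0) sqrf_eq0 subr_eq0 => /eqP.
Qed.

Definition weight_support : {set word} := [set t | w t != 0].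

Lemma eigen_coef_eq0 r (t : word) : t \notin weight_support -> eigen_coef r t = 0.
Proof. by rewrite inE negbK => /eqP wt0; rewrite /eigen_coef wt0 !mul0r. Qed.

Lemma monomial_on_gram y (t : word) : X y ->
  monomial_on weight_support y t
    = \sum_s gram_on weight_support t s * \sum_r e r y * eigen_coef r s.
Proof.
move=> Xy; rewrite /monomial_on /gram_on; case: ifP => tS; last first.
  by rewrite big1 // => s _; rewrite mul0r.
rewrite (monomial_eigen_proj Xy); last by move: tS; rewrite inE.
transitivity (\sum_s gram t s * \sum_r e r y * eigen_coef r s).
  rewrite /eigen_proj; under eq_bigr do rewrite moment_gram mulr_sumr.
  rewrite exchange_big; apply: eq_bigr => s _; rewrite mulr_sumr.
  by apply: eq_bigr => r _; ring.
apply: eq_bigr => s _; case: ifP => //= /negbT sS.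
by rewrite big1 ?mulr0 // => r _; rewrite eigen_coef_eq0 ?mulr0.
Qed.

Lemma sum_eigen_sqrE y : X y -> \sum_r e r y ^+ 2
  = \sum_(t : word) monomial_on weight_support y t * \sum_r e r y * eigen_coef r t.
Proof.
move=> Xy; transitivity (\sum_(t : word) monomial t y * \sum_r e r y * eigen_coef r t).
  under eq_bigr => r _ do rewrite expr2 {2}(eigenE r Xy) mulr_sumr.
  rewrite exchange_big; apply: eq_bigr => t _; rewrite mulr_sumr.
  by apply: eq_bigr => r _; ring.
apply: eq_bigr => t _; rewrite /monomial_on; case: ifP => // /negbT tS.
by rewrite big1 ?mulr0 // => r _; rewrite eigen_coef_eq0 ?mulr0.
Qed.

Lemma sum_eigen_sqr_le y : X y -> \sum_r e r y ^+ 2 <= eigen_bound.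
Proof.
move=> Xy; rewrite sum_eigen_sqrE // (@dot_sym_image_pinv _ _ (gram_on weight_support)).
- exact: pinv_gram_quad_le.
- by move=> t s; rewrite /gram_on andbC gramC.
- by move=> t; exact: monomial_on_gram.
Qed.

End decomposition.

End monomial_gram.

Lemma a_coef_le1 (R : realType) (I : Type) (nu : I -> R) (gamma : R) (r : I) :
  0 < nu r -> 0 <= gamma -> a_coef nu gamma r <= 1.
Proof.
move=> nu_gt0 gamma_ge0; have gnu_ge0 : 0 <= gamma / nu r by rewrite divr_ge0 // ltW.
by rewrite /a_coef div1r invf_le1 ?lerDl // ltr_wpDr.
Qed.

Theorem lemma3 (R : realType) (d p : nat) (X : set (Rd R d))
    (P : probability (Rd R d) R) :
  measurable X -> X !=set0 -> [bounded x | x in (X : set 'rV[R]_d)] ->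
  P X = 1%E ->
  exists C : R, 0 < C /\
    forall (a gamma : R), 0 <= a -> 0 < gamma ->
    forall (I : finType) (nu : I -> R) (e : I -> Rd R d -> R),
      kernel_decomposition X P (kpoly p a) nu e ->
      (H_gamma X nu e gamma <= C%:E)%E.
Proof.
move=> mX _ /bounded_coord_le[K [K1 XK]] _.
exists (eigen_bound p X P K); split; first exact: eigen_bound_gt0.
move=> a gamma a_ge0 gamma_gt0 I nu e [nu_gt0 [me [e2 [orth [eig dec]]]]].
apply: ge_ereal_sup => _ [y Xy <-]; rewrite lee_fin.
apply: le_trans (sum_eigen_sqr_le mX K1 XK a_ge0 nu_gt0 me e2 orth eig dec Xy).
apply: ler_sum => r _; rewrite -[leRHS]mul1r ler_wpM2r ?sqr_ge0 //.
exact: a_coef_le1 (ltW gamma_gt0).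
Qed.
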